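(* Fix an integer $k\ge 2$ and constants $\alpha>0$, $0<p<1$, and let $\tau=\frac1{1-p}$, $r_{cr}=\frac{1}{\ln\tau}$. Suppose $k<\frac{\tau\ln\tau}{\tau-1}$. Then there exists $r_0<r_{cr}$ such that for every $r\in(r_0,r_{cr})$, the number $X$ of solutions of a random instance of Model RB with parameters $(n,\alpha,r,k,p)$ satisfies $\mathbb{E}[X]^2/\mathbb{E}[X^2]=o(1)$ as $n\to\infty$.
   Context: Model RB with parameters $(n,\alpha,r,k,p)$, where $n$ is the number of variables, $\alpha>0$, $r>0$, $k\ge 2$ an integer and $0<p<1$: there are $n$ variables $x_1,\dots,x_n$, each with the same domain $D$ of size $d=n^{\alpha}$ (treated as an integer). A random instance is generated as follows: (1) select, independently with repetition, $t=rn\ln d$ constraints, the scope of each being a set of $k$ distinct variables chosen uniformly at random among the $n$ variables; (2) for each constraint, select uniformly at random without repetition a set of $q=p\,d^{k}$ ''incompatible'' tuples from $D^{k}$. An assignment to all variables is a solution if for every constraint the tuple of values of its scope is not incompatible. Limits are as $n\to\infty$ with $\alpha,r,k,p$ fixed. *)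

From Stdlib Require Import Reals.
From mathcomp Require Import all_boot.

Set Implicit Arguments.
Unset Strict Implicit.
Unset Printing Implicit Defensive.

(* floor of a real, as a nat (negative values are sent to 0) *)
Definition nfloor (x : R) : nat := Z.to_nat (Int_part x).

Definition RB_d (n : nat) (alpha : R) : nat := nfloor (Rpower (INR n) alpha).
Definition RB_t (n : nat) (alpha r : R) : nat :=
  nfloor (Rmult (Rmult r (INR n)) (ln (INR (RB_d n alpha)))).
Definition RB_q (n : nat) (alpha : R) (k : nat) (p : R) : nat :=
  nfloor (Rmult p (pow (INR (RB_d n alpha)) k)).

(* A constraint: a scope (set of variables) and a set of incompatible tuples.
   The i-th entry of a tuple is the value of the i-th scope variable in
   increasing order of the variable index. *)
Definition constr (n d k : nat) : finType :=
  ({set 'I_n} * {set k.-tuple 'I_d})%type.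

Definition wf_constr (n d k q : nat) (c : constr n d k) : bool :=
  (#|c.1| == k) && (#|c.2| == q).

Definition sat_constr (n d k : nat) (c : constr n d k) (sigma : {ffun 'I_n -> 'I_d}) : bool :=
  [forall u in c.2, val u != [seq sigma x | x <- enum c.1]].

(* An instance: a t-sequence of constraints (chosen independently, with repetition).
   The valid instances are those whose scopes have k elements and whose
   incompatible sets have q elements; the model draws uniformly among them. *)
Definition RB_instance (n d k t : nat) : finType := {ffun 'I_t -> constr n d k}.

Definition RB_valid (n d k q t : nat) (I : RB_instance n d k t) : bool :=
  [forall i, wf_constr q (I i)].

Definition RB_nsol (n d k t : nat) (I : RB_instance n d k t) : nat :=
  #|[set sigma : {ffun 'I_n -> 'I_d} | [forall i, sat_constr (I i) sigma]]|.

Definition moment_aux (n d k q t m : nat) : R :=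
  Rdiv (INR (\sum_(I : RB_instance n d k t | RB_valid q I) RB_nsol I ^ m))
       (INR #|[set I : RB_instance n d k t | RB_valid q I]|).

Definition RB_moment (n : nat) (alpha r : R) (k : nat) (p : R) (m : nat) : R :=
  moment_aux n (RB_d n alpha) k (RB_q n alpha k p) (RB_t n alpha r) m.

(* Write D = d^k, c = C(n,k) and C0, C1, C2 = C(D,q), C(D-1,q), C(D-2,q).
   Double counting over assignments expresses the moments as
     E[X]   = sum over s of (#valid constraints satisfied by s / c C0)^t
            <= d^n (c C1 / (c C0))^t,
     E[X^2] = sum over pairs (s, s') of (#valid constraints satisfied by both / c C0)^t,
   and restricting the second sum to pairs agreeing on the first m variables
   (one forbidden tuple on the C(m,k) scopes inside, at most two elsewhere)
   yields  E[X]^2 / E[X^2] <= d^m * pair_factor^t  (lemma [moment_ratio_le]).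
   Taking m = floor (s0 n), with tau = 1/(1-p) the pair factor tends to
   1 / (1 + (tau - 1) s0^k) and t ~ r n ln d, so the bound is
   exp (n ln d (s0 - r ln (1 + (tau - 1) s0^k) + o(1))).  The hypothesis
   k < tau ln tau / (tau - 1) says that s |-> ln (1 + (tau - 1) s^k) - s ln tau
   has negative slope at its zero s = 1, which provides s0 < 1 with
   s0 ln tau < ln (1 + (tau - 1) s0^k); then r0 = s0 / ln (1 + (tau - 1) s0^k)
   is below r_cr = 1 / ln tau and every r > r0 makes the exponent negative. *)

From Stdlib Require Import Reals Lra Lia ZArith.
From Coquelicot Require Import Coquelicot.
From mathcomp Require Import all_boot zify.

Set Implicit Arguments.
Unset Strict Implicit.

Local Open Scope nat_scope.

Lemma card_set_sum (T : finType) (P : pred T) : #|[set x | P x]| = \sum_x (P x : nat).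
Proof.
rewrite -sum1_card big_mkcond /=; apply: eq_bigr => x _.
by rewrite inE; case: (P x).
Qed.

Lemma sum_card_exchange (A B : finType) (V : pred A) (P : A -> pred B) :
  \sum_(a | V a) #|[set b | P a b]| = \sum_b #|[set a | V a && P a b]|.
Proof.
under eq_bigr do rewrite card_set_sum.
under [RHS]eq_bigr do rewrite card_set_sum.
rewrite big_mkcond [RHS]exchange_big /=; apply: eq_bigr => a _.
by case: (V a) => //; rewrite big1.
Qed.

Lemma sum_cond_const (T : finType) (P : pred T) (c : nat) :
  \sum_(x | P x) c = #|[set x | P x]| * c.
Proof. by rewrite -sum_nat_const; apply: eq_bigl => x; rewrite inE. Qed.

Lemma sum_split_ge (T : finType) (P Q : pred T) (f : T -> nat) (a b : nat) :
  (forall x, P x -> Q x -> a <= f x) -> (forall x, P x -> ~~ Q x -> b <= f x) ->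
  #|[set x | P x && Q x]| * a + (#|[set x | P x]| - #|[set x | P x && Q x]|) * b
    <= \sum_(x | P x) f x.
Proof.
move=> hQ hNQ.
have -> : #|[set x | P x]| - #|[set x | P x && Q x]| = #|[set x | P x && ~~ Q x]|.
  rewrite !card_set_sum.
  have -> : \sum_x (P x : nat) = \sum_x (P x && Q x : nat) + \sum_x (P x && ~~ Q x : nat).
    by rewrite -big_split; apply: eq_bigr => x _; case: (P x); case: (Q x).
  by rewrite addKn.
rewrite (bigID Q) /=; apply: leq_add; rewrite -sum_cond_const; apply: leq_sum.
- by move=> x /andP[]; apply: hQ.
- by move=> x /andP[]; apply: hNQ.
Qed.

Lemma card_draws_sub (T : finType) (B : {set T}) (j : nat) :
  #|[set U : {set T} | (#|U| == j) && (U \subset B)]| = 'C(#|B|, j).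
Proof. by rewrite -cards_draws; apply: eq_card => U; rewrite !inE andbC. Qed.

Lemma forall_andb (T : finType) (A B : pred T) :
  [forall i, A i] && [forall i, B i] = [forall i, A i && B i].
Proof.
apply/andP/forallP => [[/forallP HA /forallP HB] i|H]; first by rewrite HA HB.
by split; apply/forallP => i; case/andP: (H i).
Qed.

(** The moments of the number of solutions as sums over assignments. *)

Section Moments.
Variables (n d k q t : nat).
Local Notation assignment := {ffun 'I_n -> 'I_d}.
Local Notation instance := (RB_instance n d k t).

Lemma card_ffun_all (C : finType) (P : {set C}) :
  #|[set I : {ffun 'I_t -> C} | [forall i, I i \in P]]| = #|P| ^ t.
Proof.
rewrite -[in RHS](card_ord t) -card_ffun_on; apply: eq_card => I.
by rewrite inE; apply/forallP/ffun_onP => H x; exact: H.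
Qed.

Lemma card_valid_instances :
  #|[set I : instance | RB_valid q I]| = #|[set c : constr n d k | wf_constr q c]| ^ t.
Proof.
rewrite -card_ffun_all; apply: eq_card => I; rewrite !inE.
by apply: eq_forallb => i; rewrite inE.
Qed.

(* First moment: each assignment is a solution of [N1 s ^ t] valid instances,
   where [N1 s] counts the valid constraints satisfied by [s]. *)
Lemma sum_first_moment :
  \sum_(I : instance | RB_valid q I) RB_nsol I ^ 1 =
  \sum_(s : assignment) #|[set c : constr n d k | wf_constr q c && sat_constr c s]| ^ t.
Proof.
under eq_bigr do rewrite expn1 /RB_nsol.
rewrite sum_card_exchange; apply: eq_bigr => s _.
rewrite -card_ffun_all; apply: eq_card => I.
by rewrite !inE /RB_valid forall_andb; apply: eq_forallb => i; rewrite inE.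
Qed.

(* Second moment: the same double counting, over pairs of assignments. *)
Lemma sum_second_moment :
  \sum_(I : instance | RB_valid q I) RB_nsol I ^ 2 =
  \sum_(s : assignment) \sum_(s' : assignment)
     #|[set c : constr n d k | [&& wf_constr q c, sat_constr c s & sat_constr c s']]| ^ t.
Proof.
transitivity (\sum_(I : instance | RB_valid q I)
   #|[set p : assignment * assignment |
        [forall i, sat_constr (I i) p.1] && [forall i, sat_constr (I i) p.2]]|).
  apply: eq_bigr => I _; rewrite /RB_nsol expnS expn1 -cardsX.
  by apply: eq_card => -[a b]; rewrite !inE.
rewrite sum_card_exchange pair_big /=; apply: eq_bigr => -[s s'] _ /=.
rewrite -card_ffun_all; apply: eq_card => I.
by rewrite !inE /RB_valid !forall_andb; apply: eq_forallb => i; rewrite inE.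
Qed.

End Moments.

(** Counting the constraints satisfied by one or two assignments. *)

Section Constraints.
Variables (n d k q : nat).
Local Notation assignment := {ffun 'I_n -> 'I_d}.

Definition scope_values (s : assignment) (S : {set 'I_n}) : seq 'I_d :=
  [seq s x | x <- enum S].

Definition avoiding (w : seq 'I_d) : {set k.-tuple 'I_d} := [set u | val u != w].

Lemma sat_constr_avoiding (S : {set 'I_n}) (U : {set k.-tuple 'I_d}) (s : assignment) :
  sat_constr ((S, U) : constr n d k) s = (U \subset avoiding (scope_values s S)).
Proof.
rewrite /sat_constr /=; apply/forallP/subsetP => H u.
  by move=> uU; rewrite inE; have := H u; rewrite uU.
by apply/implyP => uU; have := H u uU; rewrite inE.
Qed.

Lemma avoidingC (w : seq 'I_d) : avoiding w = ~: [set u : k.-tuple 'I_d | val u == w].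
Proof. by apply/setP => u; rewrite !inE. Qed.

Lemma card_tuple_eq_le1 (w : seq 'I_d) : #|[set u : k.-tuple 'I_d | val u == w]| <= 1.
Proof.
apply/card_le1_eqP => u v; rewrite !inE => /eqP hu /eqP hv.
by apply: val_inj; rewrite hu hv.
Qed.

Lemma card_avoiding_ge (w : seq 'I_d) : d ^ k - 1 <= #|avoiding w|.
Proof.
rewrite avoidingC; have := card_tuple_eq_le1 w.
have := cardsC [set u : k.-tuple 'I_d | val u == w]; rewrite card_tuple card_ord.
by move: (#|_|) (#|~: _|) => a b; lia.
Qed.

Lemma card_avoiding_le (w : seq 'I_d) : size w = k -> #|avoiding w| <= d ^ k - 1.
Proof.
move=> hw; rewrite avoidingC.
have := cardsC [set u : k.-tuple 'I_d | val u == w]; rewrite card_tuple card_ord.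
have : 0 < #|[set u : k.-tuple 'I_d | val u == w]|.
  by apply/card_gt0P; exists (Tuple (introT eqP hw)); rewrite inE.
by move: (#|_|) (#|~: _|) => a b; lia.
Qed.

Lemma card_avoiding2_ge (w w' : seq 'I_d) : d ^ k - 2 <= #|avoiding w :&: avoiding w'|.
Proof.
rewrite !avoidingC -setCU.
set E := [set u : k.-tuple 'I_d | val u == w]; set E' := [set u : k.-tuple 'I_d | val u == w'].
have := cardsC (E :|: E'); rewrite card_tuple card_ord.
have := cardsUI E E'; have := card_tuple_eq_le1 w; have := card_tuple_eq_le1 w'.
by move: #|E| #|E'| #|E :|: E'| #|E :&: E'| #|~: (E :|: E')| => a b x y z; lia.
Qed.

Lemma card_constr_by_scope (P : pred {set 'I_n}) (Q : {set 'I_n} -> pred {set k.-tuple 'I_d}) :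
  #|[set c : constr n d k | P c.1 && Q c.1 c.2]| = \sum_(S | P S) #|[set U | Q S U]|.
Proof.
rewrite (card_set_sum (fun c : constr n d k => P c.1 && Q c.1 c.2)).
rewrite -(pair_big predT predT (fun S U => (P S && Q S U) : nat)) /= [RHS]big_mkcond.
apply: eq_bigr => S _; case: (P S) => /=; last by rewrite big1.
by rewrite (card_set_sum (Q S)).
Qed.

Lemma card_valid_constr : #|[set c : constr n d k | wf_constr q c]| = 'C(n, k) * 'C(d ^ k, q).
Proof.
have -> : #|[set c : constr n d k | wf_constr q c]| =
    \sum_(S : {set 'I_n} | #|S| == k) #|[set U : {set k.-tuple 'I_d} | #|U| == q]|.
  rewrite -(card_constr_by_scope (fun S => #|S| == k) (fun _ U => #|U| == q)).
  by apply: eq_card => c; rewrite !inE.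
by rewrite sum_cond_const !card_draws card_tuple !card_ord.
Qed.

(* An assignment satisfies at most [C(n,k) C(d^k - 1, q)] valid constraints:
   on each scope exactly one tuple is forbidden to the incompatible set. *)
Lemma card_sat_constr_le (s : assignment) :
  #|[set c : constr n d k | wf_constr q c && sat_constr c s]| <= 'C(n, k) * 'C(d ^ k - 1, q).
Proof.
have -> : #|[set c : constr n d k | wf_constr q c && sat_constr c s]| =
    \sum_(S : {set 'I_n} | #|S| == k)
      #|[set U : {set k.-tuple 'I_d} | (#|U| == q) && (U \subset avoiding (scope_values s S))]|.
  rewrite -(card_constr_by_scope (fun S => #|S| == k)
             (fun S U => (#|U| == q) && (U \subset avoiding (scope_values s S)))).
  by apply: eq_card => -[S U]; rewrite !inE /wf_constr sat_constr_avoiding /= andbA.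
rewrite -[n in 'C(n, _)]card_ord -card_draws -sum_cond_const.
apply: leq_sum => S /eqP hS; rewrite card_draws_sub; apply: leq_bin2l.
by apply: card_avoiding_le; rewrite size_map -cardE.
Qed.

(* Two assignments agreeing on [A] jointly satisfy at least
   [C(|A|,k) C(d^k - 1, q) + (C(n,k) - C(|A|,k)) C(d^k - 2, q)] valid constraints:
   a scope inside [A] forbids one tuple, any other scope at most two. *)
Lemma card_sat2_constr_ge (A : {set 'I_n}) (s s' : assignment) :
  {in A, forall x, s x = s' x} ->
  'C(#|A|, k) * 'C(d ^ k - 1, q) + ('C(n, k) - 'C(#|A|, k)) * 'C(d ^ k - 2, q) <=
  #|[set c : constr n d k | [&& wf_constr q c, sat_constr c s & sat_constr c s']]|.
Proof.
move=> agree.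
have -> : #|[set c : constr n d k | [&& wf_constr q c, sat_constr c s & sat_constr c s']]| =
    \sum_(S : {set 'I_n} | #|S| == k) #|[set U : {set k.-tuple 'I_d} | (#|U| == q) &&
       (U \subset avoiding (scope_values s S) :&: avoiding (scope_values s' S))]|.
  rewrite -(card_constr_by_scope (fun S => #|S| == k) (fun S U => (#|U| == q) &&
             (U \subset avoiding (scope_values s S) :&: avoiding (scope_values s' S)))).
  by apply: eq_card => -[S U]; rewrite !inE /wf_constr !sat_constr_avoiding subsetI /= !andbA.
rewrite -card_draws_sub -[n in 'C(n, k)]card_ord -card_draws; apply: sum_split_ge => S _.
- move=> SA; have -> : scope_values s' S = scope_values s S.
    by apply/esym/eq_in_map => x; rewrite mem_enum => xS; apply: agree; exact: (subsetP SA).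
  by rewrite setIid card_draws_sub; apply: leq_bin2l; apply: card_avoiding_ge.
- by move=> _; rewrite card_draws_sub; apply: leq_bin2l; apply: card_avoiding2_ge.
Qed.
End Constraints.

Lemma card_agreeing (n d : nat) (A : {set 'I_n}) (s : {ffun 'I_n -> 'I_d}) :
  #|[set s' : {ffun 'I_n -> 'I_d} | [forall x in A, s' x == s x]]| = d ^ (n - #|A|).
Proof.
pose F := fun x : 'I_n => if x \in A then pred1 (s x) else [pred y : 'I_d | true].
have -> : #|[set s' : {ffun 'I_n -> 'I_d} | [forall x in A, s' x == s x]]| =
          #|(family F : simpl_pred {ffun 'I_n -> 'I_d})|.
  apply: eq_card => s'; rewrite inE; apply/forallP/familyP => H x.
    by rewrite /F; case: (boolP (x \in A)) => xA //=; have := H x; rewrite xA.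
  by have := H x; rewrite /F; case: (x \in A).
rewrite card_family foldrE big_map big_enum /=.
transitivity (\prod_(x in ~: A) d).
  rewrite [RHS]big_mkcond /=; apply: eq_bigr => x _; rewrite /F inE.
  by case: (x \in A) => /=; [rewrite card1 | rewrite card_ord].
by rewrite prod_nat_const cardsCs setCK card_ord.
Qed.

Lemma card_prefix (n m : nat) : m <= n -> #|[set x : 'I_n | x < m]| = m.
Proof.
move=> hm; rewrite (card_set_sum (fun x : 'I_n => x < m)) -big_mkcond /=.
by rewrite -(big_ord_widen _ (fun _ => 1) hm) sum1_card card_ord.
Qed.

Section MomentBounds.
Variables (n d k q t : nat).

(* [d^n] assignments, each a solution of at most [(C(n,k) C(d^k-1,q))^t] valid instances. *)
Lemma first_moment_sum_le :
  \sum_(I : RB_instance n d k t | RB_valid q I) RB_nsol I ^ 1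
    <= d ^ n * ('C(n, k) * 'C(d ^ k - 1, q)) ^ t.
Proof.
rewrite sum_first_moment.
have -> : d ^ n = #|{: {ffun 'I_n -> 'I_d}}| by rewrite card_ffun !card_ord.
rewrite -sum1_card big_distrl /=; apply: leq_sum => s _; rewrite mul1n.
by case: t => // t'; rewrite leq_exp2r //; apply: card_sat_constr_le.
Qed.

(* Restricting the second moment to the pairs of assignments that agree on the
   first [m] variables. *)
Lemma second_moment_sum_ge (m : nat) : m <= n ->
  d ^ n * (d ^ (n - m) *
    ('C(m, k) * 'C(d ^ k - 1, q) + ('C(n, k) - 'C(m, k)) * 'C(d ^ k - 2, q)) ^ t)
  <= \sum_(I : RB_instance n d k t | RB_valid q I) RB_nsol I ^ 2.
Proof.
move=> hm; rewrite sum_second_moment.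
set A := [set x : 'I_n | x < m].
have hA : #|A| = m by apply: card_prefix.
have -> : d ^ n = #|{: {ffun 'I_n -> 'I_d}}| by rewrite card_ffun !card_ord.
rewrite -sum1_card big_distrl /=; apply: leq_sum => s _; rewrite mul1n.
rewrite -hA -(card_agreeing A s) -sum1_card big_distrl /= [X in X <= _]big_mkcond /=.
apply: leq_sum => s' _; rewrite inE mul1n.
case: (boolP [forall x in A, s' x == s x]) => // /forall_inP agree.
case: t => // t'; rewrite leq_exp2r //.
by apply: card_sat2_constr_ge => x xA; apply/esym/eqP; exact: agree.
Qed.
End MomentBounds.

Lemma bin_sub1 (D q : nat) : D * 'C(D - 1, q) = (D - q) * 'C(D, q).
Proof. by rewrite subn1 mul_bin_down. Qed.

Lemma bin_sub2 (D q : nat) : (D - 1) * 'C(D - 2, q) = (D - 1 - q) * 'C(D - 1, q).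
Proof.
have -> : D - 2 = (D - 1).-1 by rewrite -subn1 -subnDA.
by rewrite mul_bin_down.
Qed.

Lemma ffact_ge (m k : nat) : (m - k) ^ k <= 'C(m, k) * k`!.
Proof.
rewrite bin_ffact ffact_prod -(card_ord k) -prod_nat_const card_ord.
by apply: leq_prod => i _; apply: leq_sub2l; exact: ltnW (ltn_ord i).
Qed.

Lemma ffact_le (m k : nat) : 'C(m, k) * k`! <= m ^ k.
Proof.
rewrite bin_ffact ffact_prod -(card_ord k) -prod_nat_const card_ord.
by apply: leq_prod => i _; exact: leq_subr.
Qed.

(** From counts to a real bound on [E[X]^2 / E[X^2]]. *)

Local Open Scope R_scope.

Lemma INR_expn (a b : nat) : INR (a ^ b)%N = INR a ^ b.
Proof. by elim: b => [|b IH]; rewrite ?expn0 // expnS mult_INR IH. Qed.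

Lemma INR_muln (a b : nat) : INR (a * b)%N = INR a * INR b.
Proof. exact: mult_INR. Qed.

Lemma INR_subn (a b : nat) : (b <= a)%N -> INR (a - b)%N = INR a - INR b.
Proof. by move=> h; rewrite -minus_INR //; apply/leP. Qed.

Lemma pow_div (x y : R) (t : nat) : (x / y) ^ t = x ^ t / y ^ t.
Proof. by rewrite /Rdiv Rpow_mult_distr pow_inv. Qed.

Lemma sq_ratio_le (E1 E2 U W : R) :
  0 <= E1 -> E1 <= U -> 0 < W -> W <= E2 -> E1 ^ 2 / E2 <= U ^ 2 / W.
Proof.
move=> h1 h2 h3 h4; apply: (Rle_trans _ (E1 ^ 2 / W)).
  by apply: Rmult_le_compat_l; [apply: pow_le | apply: Rinv_le_contravar].
apply: Rmult_le_compat_r; first by apply: Rlt_le; apply: Rinv_0_lt_compat.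
by apply: pow_incr; lra.
Qed.

(* The ratio of the two moment bounds, normalized by the number [(c C0)^t] of
   valid instances: [d^m] times the [t]-th power of a per-constraint factor. *)
Lemma ratio_of_bounds (dr cr C0 C1 L : R) (n m t : nat) : (m <= n)%N ->
  0 < dr -> 0 < cr -> 0 < C0 -> 0 < L ->
  (dr ^ n * (cr * C1) ^ t / (cr * C0) ^ t) ^ 2 / (dr ^ n * (dr ^ (n - m) * L ^ t) / (cr * C0) ^ t)
    = dr ^ m * ((cr * C1) ^ 2 / (cr * C0 * L)) ^ t.
Proof.
move=> hmn hd hc h0 hL.
have -> : dr ^ n = dr ^ m * dr ^ (n - m) by rewrite -pow_add; congr (_ ^ _); lia.
have -> : ((cr * C1) ^ 2 / (cr * C0 * L)) ^ t = ((cr * C1) ^ t) ^ 2 / ((cr * C0) ^ t * L ^ t).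
  by rewrite pow_div (Rpow_mult_distr (cr * C0) L) -!pow_mult (Nat.mul_comm 2 t).
have : 0 < (cr * C0) ^ t by apply: pow_lt; nra.
have : 0 < L ^ t by apply: pow_lt.
have : 0 < dr ^ m by apply: pow_lt.
have : 0 < dr ^ (n - m) by apply: pow_lt.
move: ((cr * C1) ^ t) ((cr * C0) ^ t) (L ^ t) (dr ^ m) (dr ^ (n - m)) => a b c e f *.
by field; repeat split; lra.
Qed.

(* With [D] tuples and [qr] incompatible ones, a fixed word is allowed with
   probability [1 - qr/D] and two distinct words with probability
   [(1 - qr/D)(1 - qr/(D-1))]; if a fraction [b] of the scopes lies where two
   assignments agree, [pair_factor D qr b] is [P(sat)^2 / P(both sat)] for one
   constraint. *)
Definition pair_factor (D qr b : R) : R :=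
  (1 - qr / D) ^ 2 /
  ((1 - qr / D) * (1 - qr / (D - 1)) + b * ((1 - qr / D) - (1 - qr / D) * (1 - qr / (D - 1)))).

(* The exact per-constraint factor, expressed with the binomial counts
   [C0 = C(D,q)], [C1 = C(D-1,q)], [C2 = C(D-2,q)] and [a] of the [c] scopes
   inside the agreement set, is nonnegative and at most [pair_factor D qr b]
   when [b <= a/c]. *)
Lemma constraint_factor_le (c a C0 C1 C2 D qr b : R) :
  0 < c -> 0 <= a <= c -> 0 < C0 ->
  D * C1 = (D - qr) * C0 -> (D - 1) * C2 = (D - 1 - qr) * C1 ->
  0 <= qr -> 2 <= D - qr -> 0 <= b <= a / c ->
  0 <= (c * C1) ^ 2 / (c * C0 * (a * C1 + (c - a) * C2)) <= pair_factor D qr b.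
Proof.
move=> hc ha h0 e1 e2 hq hD hb.
set r1 := 1 - qr / D; set u := 1 - qr / (D - 1).
have er1 : r1 = (D - qr) / D by rewrite /r1; field; lra.
have eu : u = (D - 1 - qr) / (D - 1) by rewrite /u; field; lra.
have hr1 : 0 < r1 by rewrite er1; apply: Rdiv_lt_0_compat; lra.
have hu : 0 < u by rewrite eu; apply: Rdiv_lt_0_compat; lra.
have hu1 : u <= 1.
  have : 0 <= qr / (D - 1) by apply: Rdiv_le_0_compat; lra.
  rewrite /u; lra.
have eC1 : C1 = r1 * C0 by rewrite er1; apply: (Rmult_eq_reg_l D); [rewrite e1; field|]; lra.
have eC2 : C2 = r1 * u * C0.
  by rewrite eu; apply: (Rmult_eq_reg_l (D - 1)); [rewrite e2 eC1; field|]; lra.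
have hr2 : 0 < r1 * u by nra.
have hr12 : r1 * u <= r1 by nra.
have hgap : 0 <= a * (r1 - r1 * u) by nra.
have hmix : 0 < c * (r1 * u) + a * (r1 - r1 * u) by nra.
have -> : (c * C1) ^ 2 / (c * C0 * (a * C1 + (c - a) * C2)) =
          r1 ^ 2 / (r1 * u + a / c * (r1 - r1 * u)).
  rewrite eC1 eC2; field; repeat split; nra.
have hden : 0 < r1 * u + b * (r1 - r1 * u).
  have : 0 <= b * (r1 - r1 * u) by apply: Rmult_le_pos; lra.
  lra.
split.
  apply: Rdiv_le_0_compat; first by apply: pow_le; lra.
  have : 0 <= a / c * (r1 - r1 * u) by apply: Rmult_le_pos; lra.
  lra.
rewrite /pair_factor -/r1 -/u /Rdiv.
apply: Rmult_le_compat_l; first by apply: pow_le; lra.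
apply: Rinv_le_contravar => //.
have : b * (r1 - r1 * u) <= a / c * (r1 - r1 * u) by apply: Rmult_le_compat_r; lra.
lra.
Qed.

Lemma scope_fraction_ge (n m k : nat) : (k <= n)%N -> (0 < n)%N ->
  (INR (m - k) / INR n) ^ k <= INR 'C(m, k) / INR 'C(n, k).
Proof.
move=> hkn hn.
have hf : 0 < INR k`! by apply: lt_0_INR; apply/ltP; exact: fact_gt0.
have hc : 0 < INR 'C(n, k) by apply: lt_0_INR; apply/ltP; rewrite bin_gt0.
have hnr : 0 < INR n by apply: lt_0_INR; apply/ltP.
have lo : INR (m - k) ^ k <= INR 'C(m, k) * INR k`!.
  by rewrite -INR_expn -mult_INR; apply: le_INR; apply/leP; exact: ffact_ge.
have hi : INR 'C(n, k) * INR k`! <= INR n ^ k.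
  by rewrite -INR_expn -mult_INR; apply: le_INR; apply/leP; exact: ffact_le.
have -> : INR 'C(m, k) / INR 'C(n, k) = INR 'C(m, k) * INR k`! / (INR 'C(n, k) * INR k`!).
  by field; lra.
rewrite pow_div /Rdiv; apply: Rmult_le_compat => //.
- by apply: pow_le; exact: pos_INR.
- by apply: Rlt_le; apply: Rinv_0_lt_compat; apply: pow_lt.
- by apply: Rinv_le_contravar => //; nra.
Qed.

Lemma moment_ratio_le_binomials (n d k q t m : nat) :
  (m <= n)%N -> (k <= n)%N -> (0 < d)%N -> (q + 2 <= d ^ k)%N ->
  let c := 'C(n, k) in let C0 := 'C(d ^ k, q) in let C1 := 'C(d ^ k - 1, q) in
  let L := ('C(m, k) * C1 + (c - 'C(m, k)) * 'C(d ^ k - 2, q))%N in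
  moment_aux n d k q t 1 ^ 2 / moment_aux n d k q t 2 <=
  INR d ^ m * ((INR c * INR C1) ^ 2 / (INR c * INR C0 * INR L)) ^ t.
Proof.
move=> hmn hkn hd hqD c C0 C1 L.
have pos (x : nat) : (0 < x)%N -> 0 < INR x by move=> h; apply: lt_0_INR; apply/ltP.
have hc : (0 < c)%N by rewrite bin_gt0.
have hC0 : (0 < C0)%N by rewrite bin_gt0; lia.
have hL : (0 < L)%N.
  have hC2 : (0 < 'C(d ^ k - 2, q))%N by rewrite bin_gt0; lia.
  apply: (@leq_trans (c * 'C(d ^ k - 2, q))); first by rewrite muln_gt0 hc hC2.
  have hmc : ('C(m, k) <= c)%N by apply: leq_bin2l.
  rewrite /L {1}(_ : c = 'C(m, k) + (c - 'C(m, k)))%N ?mulnDl; last by lia.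
  by rewrite leq_add2r leq_mul //; apply: leq_bin2l; lia.
have hV : 0 < INR ((c * C0) ^ t)%N by apply: pos; rewrite expn_gt0 muln_gt0 hc hC0.
rewrite /moment_aux card_valid_instances card_valid_constr -/c -/C0.
apply: Rle_trans.
  apply: (sq_ratio_le (U := INR (d ^ n * (c * C1) ^ t)%N / INR ((c * C0) ^ t)%N)
                      (W := INR (d ^ n * (d ^ (n - m) * L ^ t))%N / INR ((c * C0) ^ t)%N)).
  - by apply: Rdiv_le_0_compat => //; exact: pos_INR.
  - apply: Rmult_le_compat_r; first by apply: Rlt_le; apply: Rinv_0_lt_compat.
    by apply: le_INR; apply/leP; exact: first_moment_sum_le.
  - by apply: Rdiv_lt_0_compat => //; apply: pos; rewrite !muln_gt0 !expn_gt0 hd hL.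
  - apply: Rmult_le_compat_r; first by apply: Rlt_le; apply: Rinv_0_lt_compat.
    by apply: le_INR; apply/leP; exact: second_moment_sum_ge.
rewrite !mult_INR !INR_expn !mult_INR ratio_of_bounds //; first exact: Rle_refl.
all: by apply: pos.
Qed.

Lemma moment_ratio_le (n d k q t m : nat) :
  (m <= n)%N -> (k <= n)%N -> (0 < k)%N -> (0 < d)%N -> (q + 2 <= d ^ k)%N ->
  moment_aux n d k q t 1 ^ 2 / moment_aux n d k q t 2 <=
  INR d ^ m * pair_factor (INR d ^ k) (INR q) ((INR (m - k) / INR n) ^ k) ^ t.
Proof.
move=> hmn hkn hk0 hd hqD.
apply: Rle_trans (moment_ratio_le_binomials t hmn hkn hd hqD) _.
have pos (x : nat) : (0 < x)%N -> 0 < INR x by move=> h; apply: lt_0_INR; apply/ltP.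
set D := (d ^ k)%N; set c := 'C(n, k); set a := 'C(m, k).
set C0 := 'C(D, q); set C1 := 'C(D - 1, q); set C2 := 'C(D - 2, q).
have hc : 0 < INR c by apply: pos; rewrite bin_gt0.
have hC0 : 0 < INR C0 by apply: pos; rewrite bin_gt0; lia.
have hC2 : 0 < INR C2 by apply: pos; rewrite bin_gt0; lia.
have hac : (a <= c)%N by apply: leq_bin2l.
apply: Rmult_le_compat_l; first by apply: pow_le; apply: pos_INR.
apply: pow_incr.
rewrite plus_INR !mult_INR INR_subn // -INR_expn -/D.
apply: constraint_factor_le => //.
- by split; [exact: pos_INR | apply: le_INR; apply/leP].
- by rewrite -INR_muln /C1 /C0 bin_sub1 INR_muln INR_subn //; lia.
- have e := congr1 INR (bin_sub2 D q).
  rewrite !INR_muln (INR_subn (a := (D - 1)%N)) ?(INR_subn (a := D)) /= in e.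
  + exact: e.
  + lia.
  + lia.
- exact: pos_INR.
- by rewrite -INR_subn; [apply: (le_INR 2); apply/leP | ]; lia.
- split; first by apply: pow_le; apply: Rdiv_le_0_compat; [exact: pos_INR | apply: pos; lia].
  by apply: scope_fraction_ge => //; lia.
Qed.

(* If [k (tau - 1) < tau ln tau], the function [ln (1 + (tau - 1) s^k) - s ln tau],
   which vanishes at [s = 1] with derivative [k (tau - 1)/tau - ln tau < 0],
   is positive just below [1]. *)
Lemma exists_positive_gap (k : nat) (tau : R) : (1 <= k)%N -> 1 < tau ->
  INR k * (tau - 1) < tau * ln tau ->
  exists s, 0 < s < 1 /\ s * ln tau < ln (1 + (tau - 1) * s ^ k).
Proof.
move=> hk ht hkt.
pose gap s := ln (1 + (tau - 1) * s ^ k) - s * ln tau.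
pose l := INR k * (tau - 1) / tau - ln tau.
have hl : l < 0.
  rewrite /l; apply: (Rmult_lt_reg_r tau); first lra.
  by rewrite Rmult_0_l Rmult_minus_distr_r; field_simplify; lra.
have gap1 : gap 1 = 0 by rewrite /gap pow1 Rmult_1_r (_ : 1 + (tau - 1) = tau) //; ring.
have dgap : derivable_pt_lim gap 1 l.
  apply/is_derive_Reals; rewrite /gap /l; auto_derive; rewrite !pow1; first lra.
  rewrite (_ : 1 + (tau - 1) * 1 = tau); [field | ring]; lra.
have [del hdel] := dgap (- l / 2) ltac:(lra).
pose h := - Rmin del 1 / 2.
have hm1 : 0 < Rmin del 1 by apply: Rmin_glb_lt; [exact: cond_pos | lra].
have hm2 := Rmin_r del 1; have hm3 := Rmin_l del 1.
have hh : h < 0 by rewrite /h; lra.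
have hhd : Rabs h < del by rewrite /h Rabs_left; lra.
have slope : gap (1 + h) / h < l / 2.
  have := hdel h ltac:(lra) hhd; rewrite gap1 Rminus_0_r.
  by have := Rle_abs (gap (1 + h) / h - l); lra.
have gap_pos : 0 < gap (1 + h).
  have -> : gap (1 + h) = gap (1 + h) / h * h by field; lra.
  by nra.
exists (1 + h); split; first by rewrite /h; lra.
by rewrite /gap in gap_pos; lra.
Qed.

(** Limits of the parameters of Model RB. *)

Lemma nfloor_spec (x : R) : 0 <= x -> INR (nfloor x) <= x < INR (nfloor x) + 1.
Proof.
move=> hx; rewrite /nfloor; have [h1 h2] := base_Int_part x.
have hz : (0 <= Int_part x)%Z.
  have : (-1 < Int_part x)%Z by apply: lt_IZR; lra.
  lia.
by rewrite INR_IZR_INZ Z2Nat.id //; lra.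
Qed.

Lemma lim_p_infty_gt (u : nat -> R) :
  is_lim_seq u p_infty -> forall M, eventually (fun n => M < u n).
Proof. by move/is_lim_seq_spec. Qed.

Lemma lim_inv_p_infty (u : nat -> R) :
  is_lim_seq u p_infty -> is_lim_seq (fun n => / u n) 0.
Proof. by move=> h; apply: (is_lim_seq_inv _ _ h). Qed.

Lemma lim_floor_ratio (x y : nat -> R) (l : R) :
  is_lim_seq y p_infty -> eventually (fun n => 0 <= x n) ->
  is_lim_seq (fun n => x n / y n) l -> is_lim_seq (fun n => INR (nfloor (x n)) / y n) l.
Proof.
move=> hy hx hl.
apply: (is_lim_seq_le_le_loc (fun n => x n / y n - / y n) _ (fun n => x n / y n)).
- apply: filter_imp (filter_and _ _ (lim_p_infty_gt hy 0) hx) => n [h1 h2].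
  have [f1 f2] := nfloor_spec h2.
  have hy' : 0 < / y n by apply: Rinv_0_lt_compat.
  split; last by apply: Rmult_le_compat_r; lra.
  have -> : x n / y n - / y n = (x n - 1) / y n by field; lra.
  by apply: Rmult_le_compat_r; lra.
- have := is_lim_seq_minus' _ _ l 0 hl (lim_inv_p_infty hy).
  by rewrite Rminus_0_r.
- exact: hl.
Qed.

Lemma lim_Rpower_p_infty (alpha : R) : 0 < alpha ->
  is_lim_seq (fun n => Rpower (INR n) alpha) p_infty.
Proof.
move=> ha; apply/is_lim_seq_spec => M.
pose y := Rpower (Rabs M + 1) (/ alpha).
have hy : 0 < y by apply: exp_pos.
have [f1 f2] := nfloor_spec (Rlt_le _ _ hy).
exists (S (nfloor y)) => n hn.
have hyn : y < INR n by have := le_INR _ _ hn; rewrite S_INR; lra.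
have := Rlt_Rpower_l _ _ alpha ha (conj hy hyn).
rewrite /y Rpower_mult Rinv_l; last by lra.
rewrite Rpower_1; last by have := Rabs_pos M; lra.
by have := Rle_abs M; lra.
Qed.

Lemma lim_domain_size (alpha : R) : 0 < alpha ->
  is_lim_seq (fun n => INR (RB_d n alpha)) p_infty.
Proof.
move=> ha; apply: (is_lim_seq_le_p_loc (fun n => Rpower (INR n) alpha - 1)).
  exists 0%nat => n _; have [f1 f2] := nfloor_spec (Rlt_le _ _ (exp_pos (alpha * ln (INR n)))).
  by rewrite /RB_d /Rpower; lra.
have := is_lim_seq_minus _ _ _ _ p_infty (lim_Rpower_p_infty ha) (is_lim_seq_const 1).
by apply.
Qed.

Lemma lim_tuples (alpha : R) (k : nat) : 0 < alpha -> (1 <= k)%N ->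
  is_lim_seq (fun n => INR (RB_d n alpha) ^ k) p_infty.
Proof.
move=> ha hk; apply: (is_lim_seq_le_p_loc _ _ _ (lim_domain_size ha)).
apply: filter_imp (lim_p_infty_gt (lim_domain_size ha) 1) => n h.
case: k hk => [//|k _] /=; have := pow_R1_Rle (INR (RB_d n alpha)) k ltac:(lra); nra.
Qed.

Lemma lim_incompat_fraction (alpha p : R) (k : nat) : 0 < alpha -> (1 <= k)%N -> 0 < p ->
  is_lim_seq (fun n => INR (RB_q n alpha k p) / INR (RB_d n alpha) ^ k) p.
Proof.
move=> ha hk hp; have hD := lim_tuples ha hk.
apply: (lim_floor_ratio (x := fun n => p * INR (RB_d n alpha) ^ k)) => //.
- by apply: filter_imp (lim_p_infty_gt hD 0) => n h; nra.
- apply: (is_lim_seq_ext_loc (fun _ => p)); last exact: is_lim_seq_const.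
  by apply: filter_imp (lim_p_infty_gt hD 0) => n h; field; lra.
Qed.

Lemma lim_incompat_fraction1 (alpha p : R) (k : nat) : 0 < alpha -> (1 <= k)%N -> 0 < p ->
  is_lim_seq (fun n => INR (RB_q n alpha k p) / (INR (RB_d n alpha) ^ k - 1)) p.
Proof.
move=> ha hk hp; have hD := lim_tuples ha hk.
apply: (lim_floor_ratio (x := fun n => p * INR (RB_d n alpha) ^ k)).
- by have := is_lim_seq_minus _ _ _ _ p_infty hD (is_lim_seq_const 1); apply.
- by apply: filter_imp (lim_p_infty_gt hD 0) => n h; nra.
- apply: (is_lim_seq_ext_loc (fun n => p / (1 - / INR (RB_d n alpha) ^ k))).
    by apply: filter_imp (lim_p_infty_gt hD 2) => n h; field; lra.
  have := is_lim_seq_div' _ _ p (1 - 0) (is_lim_seq_const p)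
            (is_lim_seq_minus' _ _ _ _ (is_lim_seq_const 1) (lim_inv_p_infty hD)).
  by rewrite Rminus_0_r Rdiv_1_r; apply; lra.
Qed.

Definition agree_size (s0 : R) (n : nat) : nat := nfloor (s0 * INR n).

Lemma lim_agree_size (s0 : R) : 0 < s0 ->
  is_lim_seq (fun n => INR (agree_size s0 n) / INR n) s0.
Proof.
move=> hs; apply: (lim_floor_ratio (x := fun n => s0 * INR n)).
- exact: is_lim_seq_INR.
- by exists 0%nat => n _; have := pos_INR n; nra.
- apply: (is_lim_seq_ext_loc (fun _ => s0)); last exact: is_lim_seq_const.
  by apply: filter_imp (lim_p_infty_gt is_lim_seq_INR 0) => n h; field; lra.
Qed.

Lemma lim_agree_fraction (s0 : R) (k : nat) : 0 < s0 ->
  is_lim_seq (fun n => INR (agree_size s0 n - k) / INR n) s0.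
Proof.
move=> hs; have hN := is_lim_seq_INR.
apply: (is_lim_seq_ext_loc (fun n => INR (agree_size s0 n) / INR n - INR k * / INR n)).
  apply: filter_imp (filter_and _ _ (lim_p_infty_gt hN ((INR k + 1) / s0))
                       (lim_p_infty_gt hN 0)) => n [h h0].
  have [f1 f2] := nfloor_spec (x := s0 * INR n) ltac:(nra).
  have hkm : INR k <= INR (agree_size s0 n).
    have : (INR k + 1) / s0 * s0 < INR n * s0 by apply: Rmult_lt_compat_r.
    by rewrite (_ : (INR k + 1) / s0 * s0 = INR k + 1) /agree_size; [lra | field; lra].
  rewrite minus_INR; first by field; lra.
  by apply: INR_le.
have := is_lim_seq_minus' _ _ s0 (INR k * 0) (lim_agree_size hs)
          (is_lim_seq_scal_l _ (INR k) 0 (lim_inv_p_infty hN)).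
by rewrite Rmult_0_r Rminus_0_r.
Qed.

Lemma lim_pow (u : nat -> R) (l : R) (k : nat) :
  is_lim_seq u l -> is_lim_seq (fun n => u n ^ k) (l ^ k).
Proof.
move=> h; elim: k => [|k IH] /=; first exact: is_lim_seq_const.
exact: (is_lim_seq_mult' _ _ _ _ h IH).
Qed.

Lemma lim_n_ln_d (alpha : R) : 0 < alpha ->
  is_lim_seq (fun n => INR n * ln (INR (RB_d n alpha))) p_infty.
Proof.
move=> ha; have hl2 : 0 < ln 2 by rewrite -ln_1; apply: ln_increasing; lra.
apply: (is_lim_seq_le_p_loc (fun n => INR n * ln 2)); last first.
  have := is_lim_seq_mult _ _ _ _ p_infty is_lim_seq_INR (is_lim_seq_const (ln 2)).
  by apply; apply: is_Rbar_mult_p_infty_pos.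
apply: filter_imp (lim_p_infty_gt (lim_domain_size ha) 2) => n h.
apply: Rmult_le_compat_l; first exact: pos_INR.
by apply: Rlt_le; apply: ln_increasing; lra.
Qed.

Lemma lim_constraints (alpha r : R) : 0 < alpha -> 0 < r ->
  is_lim_seq (fun n => INR (RB_t n alpha r) / (INR n * ln (INR (RB_d n alpha)))) r.
Proof.
move=> ha hr; have hX := lim_n_ln_d ha.
apply: (lim_floor_ratio (x := fun n => r * INR n * ln (INR (RB_d n alpha)))) => //.
- by apply: filter_imp (lim_p_infty_gt hX 0) => n h; nra.
- apply: (is_lim_seq_ext_loc (fun _ => r)); last exact: is_lim_seq_const.
  apply: filter_imp (lim_p_infty_gt hX 0) => n h.
  by rewrite Rmult_assoc /Rdiv Rmult_assoc Rinv_r; lra.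
Qed.

Lemma tau_poly_pos (p b : R) : 0 < p < 1 -> 0 <= b -> 0 < 1 + (1 / (1 - p) - 1) * b.
Proof.
move=> hp hb.
have : 0 <= (1 / (1 - p) - 1) * b.
  apply: Rmult_le_pos => //.
  by rewrite (_ : 1 / (1 - p) - 1 = p / (1 - p)); [apply: Rdiv_le_0_compat | field]; lra.
lra.
Qed.

Definition pair_factor_seq (alpha : R) (k : nat) (p s0 : R) (n : nat) : R :=
  pair_factor (INR (RB_d n alpha) ^ k) (INR (RB_q n alpha k p))
              ((INR (agree_size s0 n - k) / INR n) ^ k).

Lemma lim_pair_factor (alpha : R) (k : nat) (p s0 : R) :
  0 < alpha -> (1 <= k)%N -> 0 < p < 1 -> 0 < s0 ->
  is_lim_seq (pair_factor_seq alpha k p s0) (/ (1 + (1 / (1 - p) - 1) * s0 ^ k)).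
Proof.
move=> ha hk hp hs.
have hx := is_lim_seq_minus' _ _ _ _ (is_lim_seq_const 1) (lim_incompat_fraction ha hk (proj1 hp)).
have hy := is_lim_seq_minus' _ _ _ _ (is_lim_seq_const 1) (lim_incompat_fraction1 ha hk (proj1 hp)).
have hb := lim_pow (k := k) (lim_agree_fraction k hs).
have hxy := is_lim_seq_mult' _ _ _ _ hx hy.
have hden := is_lim_seq_plus' _ _ _ _ hxy
               (is_lim_seq_mult' _ _ _ _ hb (is_lim_seq_minus' _ _ _ _ hx hxy)).
have hsk : 0 <= s0 ^ k by apply: pow_le; lra.
have hgap : 0 <= s0 ^ k * ((1 - p) - (1 - p) * (1 - p)) by apply: Rmult_le_pos; nra.
have := is_lim_seq_div' _ _ _ _ (lim_pow (k := 2) hx) hden ltac:(nra).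
rewrite (_ : (1 - p) ^ 2 / _ = / (1 + (1 / (1 - p) - 1) * s0 ^ k)); first exact.
have : 0 <= p * s0 ^ k by nra.
by move=> hps; field; split; nra.
Qed.

(** The ratio [E[X]^2 / E[X^2]] tends to zero. *)

Lemma lim_exp_neg (X w : nat -> R) (L : R) :
  is_lim_seq X p_infty -> is_lim_seq w L -> L < 0 ->
  is_lim_seq (fun n => exp (X n * w n)) 0.
Proof.
move=> hX hw hL.
have hXw : is_lim_seq (fun n => X n * w n) m_infty.
  by apply: (is_lim_seq_mult _ _ _ _ _ hX hw); apply: is_Rbar_mult_p_infty_neg.
by apply: (is_lim_comp_seq _ _ _ _ is_lim_exp_m _ hXw); exists 0%nat.
Qed.

(* The logarithm of the bound of [moment_ratio_le], divided by [n ln d]. *)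
Definition exponent_seq (alpha r : R) (k : nat) (p s0 : R) (n : nat) : R :=
  INR (agree_size s0 n) / INR n +
  INR (RB_t n alpha r) / (INR n * ln (INR (RB_d n alpha))) * ln (pair_factor_seq alpha k p s0 n).

Lemma lim_exponent (alpha r : R) (k : nat) (p s0 : R) :
  0 < alpha -> 0 < r -> (1 <= k)%N -> 0 < p < 1 -> 0 < s0 ->
  is_lim_seq (exponent_seq alpha r k p s0)
    (s0 - r * ln (1 + (1 / (1 - p) - 1) * s0 ^ k)).
Proof.
move=> ha hr hk hp hs.
have hpos : 0 < 1 + (1 / (1 - p) - 1) * s0 ^ k by apply: tau_poly_pos => //; apply: pow_le; lra.
have hln := is_lim_seq_continuous ln _ _
              (proj2 (continuity_pt_filterlim _ _) (continuous_ln _ (Rinv_0_lt_compat _ hpos)))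
              (lim_pair_factor ha hk hp hs).
have := is_lim_seq_plus' _ _ _ _ (lim_agree_size hs) (is_lim_seq_mult' _ _ _ _ (lim_constraints ha hr) hln).
by rewrite ln_Rinv // Ropp_mult_distr_r_reverse.
Qed.

Lemma moment_ratio_le_exp (n : nat) (alpha r : R) (k : nat) (p s0 : R) :
  (agree_size s0 n <= n)%N -> (k <= n)%N -> (0 < k)%N -> 2 <= INR (RB_d n alpha) ->
  (RB_q n alpha k p + 2 <= RB_d n alpha ^ k)%N -> 0 < pair_factor_seq alpha k p s0 n ->
  RB_moment n alpha r k p 1 ^ 2 / RB_moment n alpha r k p 2 <=
  exp (INR n * ln (INR (RB_d n alpha)) * exponent_seq alpha r k p s0 n).
Proof.
move=> hm hkn hk hd hq hG.
have hd0 : (0 < RB_d n alpha)%N by apply/ltP; apply: INR_lt; rewrite /=; lra.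
apply: Rle_trans; first exact: (@moment_ratio_le n (RB_d n alpha) k (RB_q n alpha k p) (RB_t n alpha r) _ hm hkn hk hd0 hq).
have hln : 0 < ln (INR (RB_d n alpha)) by rewrite -ln_1; apply: ln_increasing; lra.
have hn : 0 < INR n by apply: lt_0_INR; apply/ltP; lia.
right; rewrite -(exp_ln (INR (RB_d n alpha) ^ agree_size s0 n)); last by apply: pow_lt; lra.
rewrite -(exp_ln (pair_factor _ _ _ ^ _)); last exact: pow_lt.
rewrite -exp_plus !ln_pow //; last by lra.
by congr exp; rewrite /exponent_seq /pair_factor_seq; field; lra.
Qed.

(* Both moments are nonnegative (with the convention [/ 0 = 0]). *)
Lemma Rinv_ge0 (x : R) : 0 <= x -> 0 <= / x.
Proof.
case: (Req_dec x 0) => [->|hx] h; first by rewrite Rinv_0; lra.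
by apply: Rlt_le; apply: Rinv_0_lt_compat; lra.
Qed.

Lemma moment_ge0 (n : nat) (alpha r : R) (k : nat) (p : R) (j : nat) :
  0 <= RB_moment n alpha r k p j.
Proof. by apply: Rmult_le_pos; [exact: pos_INR | apply: Rinv_ge0; exact: pos_INR]. Qed.

Lemma lim_eventually_gt (u : nat -> R) (l a : R) :
  is_lim_seq u l -> a < l -> eventually (fun n => a < u n).
Proof.
move=> h hl; have := proj2 (is_lim_seq_spec u l) h (mkposreal (l - a) ltac:(lra)).
apply: filter_imp => n /= hn.
by have := Rle_abs (- (u n - l)); rewrite Rabs_Ropp; lra.
Qed.

Lemma eventually_moment_ratio_le_exp (alpha r : R) (k : nat) (p s0 : R) :
  0 < alpha -> (1 <= k)%N -> 0 < p < 1 -> 0 < s0 < 1 ->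
  eventually (fun n => RB_moment n alpha r k p 1 ^ 2 / RB_moment n alpha r k p 2 <=
                       exp (INR n * ln (INR (RB_d n alpha)) * exponent_seq alpha r k p s0 n)).
Proof.
move=> ha hk hp hs.
have hG : eventually (fun n => 0 < pair_factor_seq alpha k p s0 n).
  apply: (lim_eventually_gt (lim_pair_factor ha hk hp (proj1 hs))).
  by apply: Rinv_0_lt_compat; apply: tau_poly_pos => //; apply: pow_le; lra.
have hd := lim_p_infty_gt (lim_domain_size ha) 2.
have hD := lim_p_infty_gt (lim_tuples ha hk) (2 / (1 - p)).
have hkn : eventually (fun n => (k <= n)%N) by exists k => n /leP.
apply: filter_imp (filter_and _ _ hG (filter_and _ _ hd (filter_and _ _ hD hkn))).
move=> n [hGn [hdn [hDn hkn']]].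
apply: moment_ratio_le_exp => //; try lra.
- have [f1 _] := nfloor_spec (x := s0 * INR n) ltac:(have := pos_INR n; nra).
  by apply/leP; apply: INR_le; rewrite /agree_size; have := pos_INR n; nra.
- have hDr : 0 < INR (RB_d n alpha) ^ k by apply: pow_lt; lra.
  have [f1 _] := nfloor_spec (x := p * INR (RB_d n alpha) ^ k) ltac:(nra).
  apply/leP; apply: INR_le; rewrite plus_INR INR_expn /= /RB_q.
  have : 2 / (1 - p) * (1 - p) < INR (RB_d n alpha) ^ k * (1 - p) by apply: Rmult_lt_compat_r; lra.
  by rewrite (_ : 2 / (1 - p) * (1 - p) = 2); [lra | field; lra].
Qed.

Lemma moment_ratio_vanishes (alpha r : R) (k : nat) (p s0 : R) :
  0 < alpha -> 0 < r -> (1 <= k)%N -> 0 < p < 1 -> 0 < s0 < 1 ->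
  s0 < r * ln (1 + (1 / (1 - p) - 1) * s0 ^ k) ->
  Un_cv (fun n => RB_moment n alpha r k p 1 ^ 2 / RB_moment n alpha r k p 2) 0.
Proof.
move=> ha hr hk hp hs hneg; apply/is_lim_seq_Reals.
have hexp := lim_exp_neg (lim_n_ln_d ha) (lim_exponent ha hr hk hp (proj1 hs)) ltac:(lra).
apply: (is_lim_seq_le_le_loc _ _ _ _ _ (is_lim_seq_const 0) hexp).
apply: filter_imp (eventually_moment_ratio_le_exp r ha hk hp hs) => n hn; split => //.
by apply: Rmult_le_pos; [apply: pow2_ge_0 | apply: Rinv_ge0; exact: moment_ge0].
Qed.

Theorem claim5p3 (k : nat) (alpha p : R) :
  (2 <= k)%nat -> 0 < alpha -> 0 < p < 1 ->
  let tau := 1 / (1 - p) in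
  let rcr := 1 / ln tau in
  INR k < tau * ln tau / (tau - 1) ->
  exists r0 : R, r0 < rcr /\
    forall r : R, r0 < r < rcr ->
      Un_cv (fun n : nat =>
               (RB_moment n alpha r k p 1) ^ 2 / RB_moment n alpha r k p 2) 0.
Proof.
move=> hk ha hp tau rcr hK.
have hk1 : (1 <= k)%N by apply/leP; lia.
have htau : 1 < tau.
  rewrite /tau; apply: (Rmult_lt_reg_r (1 - p)); first lra.
  by rewrite Rmult_1_l (_ : 1 / (1 - p) * (1 - p) = 1); [lra | field; lra].
have hlt : 0 < ln tau by rewrite -ln_1; apply: ln_increasing; lra.
have hK' : INR k * (tau - 1) < tau * ln tau.
  have := Rmult_lt_compat_r (tau - 1) _ _ ltac:(lra) hK.
  by rewrite (_ : tau * ln tau / (tau - 1) * (tau - 1) = tau * ln tau) //; field; lra.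
have [s0 [hs hgap]] := exists_positive_gap hk1 htau hK'.
set l := ln (1 + (tau - 1) * s0 ^ k) in hgap.
have hl : 0 < l by have := Rmult_lt_0_compat _ _ (proj1 hs) hlt; lra.
exists (s0 / l); split.
  rewrite /rcr; apply: (Rmult_lt_reg_r (l * ln tau)); first exact: Rmult_lt_0_compat.
  rewrite (_ : s0 / l * (l * ln tau) = s0 * ln tau); last by field; lra.
  by rewrite (_ : 1 / ln tau * (l * ln tau) = l); last by field; lra.
move=> r [hr0 _].
have hr : 0 < r by apply: Rlt_trans hr0; apply: Rdiv_lt_0_compat; lra.
apply: (moment_ratio_vanishes ha hr hk1 hp hs); rewrite -/tau -/l.
have := Rmult_lt_compat_r l _ _ hl hr0.
by rewrite (_ : s0 / l * l = s0) ?(Rmult_comm r) //; field; lra.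
Qed.
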